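(* For $n>1/2$ and $x\ge 0$ the following holds: \begin{equation*} \frac{2}{x+\sqrt{4n+2+x^2}}<\frac{U(n,x)}{U (n-1,x)}<\frac{2}{x+\sqrt{4n-2+x^2}} . \end{equation*} The lower bound also holds if $n\in (-1/2,1/2)$, and it turns into an equality if $n=-1/2$.
   Context: $U(a,x)$ denotes the standard parabolic cylinder function (as in the NIST Digital Library of Mathematical Functions, Chapter 12), i.e. the solution of $y''(x)-(x^2/4+a)y(x)=0$ that is recessive (decays) as $x\rightarrow+\infty$. The parameter $n$ is real. *)

From Stdlib Require Import Reals Lra.
From Coquelicot Require Import Coquelicot.
Open Scope R_scope.

(* [is_pcfU a y]: y is the standard parabolic cylinder function U(a,.)
   (DLMF 12.2): a solution on all of R of  y'' = (x^2/4 + a) y  which is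
   recessive at +oo, normalized as in DLMF 12.9.1:
     U(a,x) ~ x^(-a-1/2) e^(-x^2/4)  as x -> +oo.
   These conditions determine U(a,.) uniquely. *)
Definition is_pcfU (a : R) (y : R -> R) : Prop :=
  (exists y' : R -> R, forall x : R,
      is_derive y x (y' x) /\ is_derive y' x ((x ^ 2 / 4 + a) * y x)) /\
  is_lim (fun x => y x * Rpower x (a + 1 / 2) * exp (x ^ 2 / 4)) p_infty 1.

From Stdlib Require Import Reals Lra.
From Coquelicot Require Import Coquelicot.
Open Scope R_scope.

(* For a solution [u > 0] of [u'' = (x^2/4 + a) u] that decays at +oo and a trial
   function [T >= 0] with primitive [G], the quantity [phi = - u' - T u] satisfies
   [(phi e^(-G))' = u (T^2 - T' - x^2/4 - a) e^(-G)].  If this Riccati defect has a fixed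
   sign on [[x0, +oo)], then [phi x0] has the opposite sign: otherwise [phi] stays bounded
   away from 0 past [x0 + 1], and [u] either becomes negative or stops decaying.
   With [T = x/2] this shows [U(a, .) > 0] on [[0, +oo)] for [a > -1/2], and with
   [T = sqrt (x^2 + 4a +- 2) / 2] it bounds [- U'(a, .) / U(a, .)] from both sides.
   The recurrence [U(a - 1, x) = x/2 U(a, x) - U'(a, x)], proved by recognising the
   right-hand side as the recessive solution with the right normalization, turns these
   bounds into bounds for [U(a, x) / U(a - 1, x)].  At [a = -1/2] both functions are
   explicit: [U(-1/2, x) = e^(-x^2/4)] and [U(-3/2, x) = x e^(-x^2/4)]. *)

Ltac rewrite_Derive H x :=
  match type of (H x) with
  | is_derive ?f _ ?l => rewrite (is_derive_unique (fun t : R => f t) x l (H x))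
  end.

Ltac fold_sq t := change (t * (t * 1)) with (t ^ 2); change (t ^ 2 * / 4) with (t ^ 2 / 4).

Lemma MVT_is_derive (f df : R -> R) (a b : R) : a < b ->
  (forall c, a <= c <= b -> is_derive f c (df c)) ->
  exists c, a < c < b /\ f b - f a = df c * (b - a).
Proof.
  intros Hab Hf.
  destruct (MVT_cor2 f df a b Hab) as [c [Hc Hbc]]; [|now exists c].
  intros c Hc; apply is_derive_Reals, Hf, Hc.
Qed.

Lemma is_derive_nonneg_le (f df : R -> R) (a b : R) : a <= b ->
  (forall c, a <= c <= b -> is_derive f c (df c)) ->
  (forall c, a < c < b -> 0 <= df c) -> f a <= f b.
Proof.
  intros [Hab | <-] Hf Hdf; [|lra].
  destruct (MVT_is_derive f df a b Hab Hf) as [c [Hc Hfc]].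
  assert (0 <= df c * (b - a)) by (apply Rmult_le_pos; [apply Hdf, Hc | lra]).
  lra.
Qed.

Lemma is_derive_zero_eq (f : R -> R) (a b : R) :
  (forall c, is_derive f c 0) -> f a = f b.
Proof.
  intros Hf. destruct (Rtotal_order a b) as [Hab | [<- | Hab]]; [| reflexivity |].
  - destruct (MVT_is_derive f (fun _ => 0) a b Hab) as [c [_ Hc]]; auto. lra.
  - destruct (MVT_is_derive f (fun _ => 0) b a Hab) as [c [_ Hc]]; auto. lra.
Qed.

Lemma is_lim_eventually_close (f : R -> R) (l : R) : is_lim f p_infty l ->
  forall eps, 0 < eps -> Rbar_locally p_infty (fun x => Rabs (f x - l) < eps).
Proof.
  intros Hf eps Heps. apply is_lim_spec in Hf. exact (Hf (mkposreal eps Heps)).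
Qed.

Lemma eventually_gt (x0 : R) : Rbar_locally p_infty (fun x => x0 < x).
Proof. now exists x0. Qed.

Lemma is_lim_Rpower_gauss (b : R) :
  is_lim (fun x => Rpower x b * exp (- (x ^ 2 / 4))) p_infty 0.
Proof.
  set (g := fun x => b * ln x - x ^ 2 / 4).
  assert (Hg : is_lim g p_infty m_infty).
  { apply (is_lim_le_m_loc (fun x => - x));
      [| apply (is_lim_opp (fun x => x) p_infty p_infty), is_lim_id].
    assert (Hb0 : 0 <= Rabs b) by apply Rabs_pos.
    exists (4 * Rabs b + 4); intros x Hx.
    assert (Hln : 0 <= ln x <= x).
    { split; [rewrite <- ln_1; apply ln_le; lra|].
      assert (H := exp_ineq1_le (ln x)). rewrite exp_ln in H; lra. }
    assert (b * ln x <= Rabs b * x).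
    { apply (Rle_trans _ (Rabs b * ln x)); [|apply Rmult_le_compat_l; lra].
      rewrite <- (Rabs_pos_eq (ln x)) at 2 by lra. rewrite <- Rabs_mult. apply RRle_abs. }
    unfold g; nra. }
  apply (is_lim_ext_loc (fun x => exp (g x))).
  - exists 0; intros x Hx. unfold g, Rpower. now rewrite <- exp_plus.
  - apply (is_lim_comp exp g p_infty 0 m_infty); [apply is_lim_exp_m | exact Hg |].
    exists 0; intros x _; discriminate.
Qed.

Lemma is_lim_one_add_div (k : R) : is_lim (fun t => 1 + k / t) p_infty 1.
Proof.
  eapply is_lim_plus; [apply is_lim_const | apply is_lim_scal_l |].
  - apply (is_lim_inv (fun t => t)); [apply is_lim_id | discriminate].
  - unfold is_Rbar_plus; simpl. now rewrite Rmult_0_r, Rplus_0_r.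
Qed.

Lemma Rdiv_lt_Rdiv (a b c d : R) : 0 < b -> 0 < d -> a * d < c * b -> a / b < c / d.
Proof.
  intros Hb Hd H.
  apply (Rmult_lt_reg_r (b * d)); [now apply Rmult_lt_0_compat|].
  replace (a / b * (b * d)) with (a * d) by (field; lra).
  replace (c / d * (b * d)) with (c * b) by (field; lra). exact H.
Qed.

Definition pcf_normalized (a : R) (u : R -> R) : Prop :=
  is_lim (fun x => u x * Rpower x (a + 1 / 2) * exp (x ^ 2 / 4)) p_infty 1.

Section Normalized.

Variables (a : R) (u : R -> R).
Hypothesis Hu : pcf_normalized a u.

Lemma normalized_eventually_pos : Rbar_locally p_infty (fun x => 0 < u x).
Proof.
  apply (filter_imp (fun x => Rabs (u x * Rpower x (a + 1 / 2) * exp (x ^ 2 / 4) - 1) < 1));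
    [| apply (is_lim_eventually_close _ _ Hu); lra].
  intros x Hx. apply Rabs_def2 in Hx.
  assert (0 < Rpower x (a + 1 / 2) * exp (x ^ 2 / 4))
    by (apply Rmult_lt_0_compat; apply exp_pos).
  apply (Rmult_lt_reg_r (Rpower x (a + 1 / 2) * exp (x ^ 2 / 4))); lra.
Qed.

Lemma normalized_is_lim_mul_id : is_lim (fun x => x * u x) p_infty 0.
Proof.
  apply (is_lim_ext_loc (fun x => (u x * Rpower x (a + 1 / 2) * exp (x ^ 2 / 4)) *
                                  (Rpower x (1 / 2 - a) * exp (- (x ^ 2 / 4))))).
  - exists 0; intros x Hx.
    assert (Hx1 : Rpower x (a + 1 / 2) * Rpower x (1 / 2 - a) = x).
    { rewrite <- Rpower_plus. replace (a + 1 / 2 + (1 / 2 - a)) with 1 by field.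
      now apply Rpower_1. }
    assert (He : exp (x ^ 2 / 4) * exp (- (x ^ 2 / 4)) = 1)
      by now rewrite <- exp_plus, Rplus_opp_r, exp_0.
    transitivity (u x * (Rpower x (a + 1 / 2) * Rpower x (1 / 2 - a)) *
                  (exp (x ^ 2 / 4) * exp (- (x ^ 2 / 4)))); [ring|].
    rewrite Hx1, He. ring.
  - replace (Finite 0) with (Rbar_mult 1 0) by (simpl; f_equal; ring).
    apply is_lim_mult; [exact Hu | apply is_lim_Rpower_gauss | exact I].
Qed.

Lemma normalized_is_lim_0 : is_lim u p_infty 0.
Proof.
  apply (is_lim_le_le_loc (fun _ => 0) (fun x => x * u x));
    [| apply is_lim_const | exact normalized_is_lim_mul_id].
  apply (filter_imp (fun x => 1 < x /\ 0 < u x));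
    [| apply filter_and; [apply eventually_gt | exact normalized_eventually_pos]].
  intros x [Hx Hux]. nra.
Qed.

End Normalized.

Section Riccati.

Variables (y dy q T dT G : R -> R).
Hypothesis Hy : forall x, is_derive y x (dy x).
Hypothesis Hdy : forall x, is_derive dy x (q x * y x).
Hypothesis HT : forall x, is_derive T x (dT x).
Hypothesis HG : forall x, is_derive G x (T x).

Lemma riccati_weight_derive (x : R) :
  is_derive (fun t => (- dy t - T t * y t) * exp (- G t)) x
            (y x * (T x ^ 2 - q x - dT x) * exp (- G x)).
Proof.
  auto_derive.
  - repeat split; eexists; eauto.
  - rewrite_Derive Hy x. rewrite_Derive Hdy x. rewrite_Derive HT x. rewrite_Derive HG x.
    ring.
Qed.

Lemma riccati_persistent (s x0 : R) :
  (forall x, x0 <= x -> 0 < y x) -> (forall x, x0 <= x -> 0 <= T x) ->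
  (forall x, x0 <= x -> 0 < s * (T x ^ 2 - q x - dT x)) ->
  0 <= s * (- dy x0 - T x0 * y x0) ->
  exists m, 0 < m /\ forall x, x0 + 1 <= x -> m <= s * (- dy x - T x * y x).
Proof.
  intros Hpos HTpos Hdefect Hx0.
  set (P := fun t => s * ((- dy t - T t * y t) * exp (- G t))).
  assert (HP : forall x z, x0 <= x -> x < z -> P x < P z).
  { intros x z Hx Hxz.
    apply (incr_function_le P x0 p_infty
             (fun t => s * (y t * (T t ^ 2 - q t - dT t) * exp (- G t))));
      [| | exact Hx | exact Hxz | exact I].
    - intros t _ _. apply is_derive_scal, riccati_weight_derive.
    - intros t Ht _.
      assert (0 < y t) by (apply Hpos, Ht).
      assert (0 < s * (T t ^ 2 - q t - dT t)) by (apply Hdefect, Ht).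
      assert (0 < exp (- G t)) by apply exp_pos.
      replace (s * (y t * (T t ^ 2 - q t - dT t) * exp (- G t)))
        with (y t * (s * (T t ^ 2 - q t - dT t)) * exp (- G t)) by ring.
      apply Rmult_lt_0_compat; [apply Rmult_lt_0_compat|]; auto. }
  assert (HP0 : 0 <= P x0).
  { unfold P. rewrite <- Rmult_assoc. apply Rmult_le_pos; [exact Hx0 | left; apply exp_pos]. }
  assert (HP1 : 0 < P (x0 + 1)) by (apply (Rle_lt_trans _ (P x0)); [|apply HP]; lra).
  exists (P (x0 + 1) * exp (G x0)). split; [apply Rmult_lt_0_compat; [exact HP1 | apply exp_pos]|].
  intros x Hx.
  assert (HPx : P (x0 + 1) <= P x)
    by (destruct Hx as [Hx | <-]; [left; apply HP; lra | right; reflexivity]).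
  assert (HGx : exp (G x0) <= exp (G x)).
  { assert (G x0 <= G x) as [h | ->]
      by (apply (is_derive_nonneg_le G T); [lra | intros; apply HG | intros; apply HTpos; lra]).
    - left; apply exp_increasing, h.
    - right; reflexivity. }
  assert (Hphi : s * (- dy x - T x * y x) = P x * exp (G x)).
  { unfold P. rewrite exp_Ropp. field. apply Rgt_not_eq, exp_pos. }
  rewrite Hphi. apply Rmult_le_compat; [lra | left; apply exp_pos | exact HPx | exact HGx].
Qed.

Lemma riccati_comparison_pos (x0 : R) :
  (forall x, x0 <= x -> 0 < y x) -> (forall x, x0 <= x -> 0 <= T x) ->
  (forall x, x0 <= x -> T x ^ 2 - q x - dT x < 0) ->
  is_lim y p_infty 0 -> is_lim (fun x => T x * y x) p_infty 0 ->
  0 < - dy x0 - T x0 * y x0.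
Proof.
  intros Hpos HTpos Hdefect Hy0 HTy0.
  destruct (Rlt_or_le 0 (- dy x0 - T x0 * y x0)) as [h | h]; [exact h | exfalso].
  destruct (riccati_persistent (-1) x0) as [m [Hm Hphi]]; auto.
  { intros x Hx. specialize (Hdefect x Hx). lra. }
  { lra. }
  (* past [x0 + 1], [y' >= m - T y >= m / 2], so [y] grows by 1 on an interval of length [2 / m] *)
  destruct (filter_and _ _ (is_lim_eventually_close _ _ Hy0 1 Rlt_0_1)
              (is_lim_eventually_close _ _ HTy0 (m / 2) ltac:(lra))) as [M HM].
  set (a := Rmax M (x0 + 1) + 1).
  assert (Ha : M < a /\ x0 + 1 < a)
    by (unfold a; split; [assert (H := Rmax_l M (x0 + 1)) | assert (H := Rmax_r M (x0 + 1))]; lra).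
  set (b := a + 2 / m).
  assert (Hab : a < b) by (unfold b; assert (0 < 2 / m) by (apply Rdiv_lt_0_compat; lra); lra).
  destruct (MVT_is_derive y dy a b Hab) as [c [Hc Hyc]]; [intros; apply Hy|].
  assert (Hdyc : m / 2 <= dy c).
  { assert (H := Hphi c ltac:(lra)). destruct (HM c ltac:(lra)) as [_ Hc2].
    apply Rabs_def2 in Hc2. lra. }
  destruct (HM b) as [Hb _]; [lra|]. apply Rabs_def2 in Hb.
  assert (0 < y a) by (apply Hpos; lra).
  assert (m / 2 * (b - a) = 1) by (unfold b; field; lra).
  assert (m / 2 * (b - a) <= dy c * (b - a)) by (apply Rmult_le_compat_r; lra).
  lra.
Qed.

Lemma riccati_comparison_neg (x0 : R) :
  (forall x, x0 <= x -> 0 < y x) -> (forall x, x0 <= x -> 0 <= T x) ->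
  (forall x, x0 <= x -> 0 < T x ^ 2 - q x - dT x) ->
  - dy x0 - T x0 * y x0 < 0.
Proof.
  intros Hpos HTpos Hdefect.
  destruct (Rlt_or_le (- dy x0 - T x0 * y x0) 0) as [h | h]; [exact h | exfalso].
  destruct (riccati_persistent 1 x0) as [m [Hm Hphi]]; auto.
  { intros x Hx. specialize (Hdefect x Hx). lra. }
  { lra. }
  (* past [x0 + 1], [y' <= - m], so [y] turns negative *)
  set (a := x0 + 1).
  assert (Hya : 0 < y a) by (apply Hpos; unfold a; lra).
  set (b := a + y a / m + 1).
  assert (Hab : a < b) by (unfold b; assert (0 < y a / m) by (apply Rdiv_lt_0_compat; lra); lra).
  destruct (MVT_is_derive y dy a b Hab) as [c [Hc Hyc]]; [intros; apply Hy|].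
  assert (Hdyc : dy c <= - m).
  { assert (H := Hphi c ltac:(unfold a in *; lra)).
    assert (0 <= T c * y c)
      by (apply Rmult_le_pos; [apply HTpos | left; apply Hpos]; unfold a in *; lra).
    lra. }
  assert (dy c * (b - a) <= - m * (b - a)) by (apply Rmult_le_compat_r; lra).
  assert (- m * (b - a) = - y a - m) by (unfold b; field; lra).
  assert (0 < y b) by (apply Hpos; unfold a in *; lra).
  lra.
Qed.

End Riccati.

Lemma last_nonpos_point (f : R -> R) (x1 : R) :
  (forall x, continuity_pt f x) -> f x1 <= 0 -> Rbar_locally p_infty (fun x => 0 < f x) ->
  exists z, x1 <= z /\ f z <= 0 /\ forall w, z < w -> 0 < f w.
Proof.
  intros Hf Hx1 [M HM].
  set (E := fun w => x1 <= w /\ f w <= 0).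
  destruct (completeness E) as [z [Hub Hlub]].
  { exists M. intros w [_ Hw]. destruct (Rle_or_lt w M) as [h | h]; [exact h|].
    specialize (HM w h). lra. }
  { exists x1. split; [apply Rle_refl | exact Hx1]. }
  assert (Hz1 : x1 <= z) by (apply Hub; split; [apply Rle_refl | exact Hx1]).
  assert (Hafter : forall w, z < w -> 0 < f w).
  { intros w Hw. destruct (Rlt_or_le 0 (f w)) as [h | h]; [exact h|].
    assert (w <= z) by (apply Hub; split; [lra | exact h]). lra. }
  exists z. split; [exact Hz1 | split; [| exact Hafter]].
  destruct (Rle_or_lt (f z) 0) as [h | h]; [exact h | exfalso].
  destruct (proj1 (continuity_pt_locally f z) (Hf z) (mkposreal (f z) h)) as [eps Heps].
  assert (z <= z - eps / 2).
  { apply Hlub. intros w [Hw1 Hw2]. destruct (Rle_or_lt w (z - eps / 2)) as [h' | h']; [exact h'|].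
    assert (w <= z) by (apply Hub; split; assumption).
    assert (Hw : Rabs (f w - f z) < f z)
      by (apply Heps; change (Rabs (w - z) < eps); apply Rabs_def1; destruct eps; simpl in *; lra).
    apply Rabs_def2 in Hw. lra. }
  destruct eps; simpl in *; lra.
Qed.

Section Recessive.

Variables (q y dy z dz : R -> R).
Hypothesis Hy : forall x, is_derive y x (dy x).
Hypothesis Hdy : forall x, is_derive dy x (q x * y x).
Hypothesis Hz : forall x, is_derive z x (dz x).
Hypothesis Hdz : forall x, is_derive dz x (q x * z x).

Lemma wronskian_const (x : R) : y x * dz x - z x * dy x = y 0 * dz 0 - z 0 * dy 0.
Proof.
  apply (is_derive_zero_eq (fun t => y t * dz t - z t * dy t)). intros t.
  auto_derive; [repeat split; eexists; eauto|].
  rewrite_Derive Hy t. rewrite_Derive Hdy t. rewrite_Derive Hz t. rewrite_Derive Hdz t.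
  ring.
Qed.

Lemma ratio_derive (x : R) : y x <> 0 ->
  is_derive (fun t => z t / y t) x ((y 0 * dz 0 - z 0 * dy 0) / y x ^ 2).
Proof.
  intros Hyx. auto_derive; [repeat split; try (eexists; eauto); exact Hyx|].
  rewrite_Derive Hy x. rewrite_Derive Hz x. rewrite <- (wronskian_const x). field. exact Hyx.
Qed.

(* A nonzero Wronskian would make [(z / y)' = W / y^2] blow up while [z / y] tends to 1. *)
Lemma wronskian_zero (x0 : R) :
  (forall x, x0 <= x -> 0 < y x) -> is_lim y p_infty 0 ->
  is_lim (fun x => z x / y x) p_infty 1 -> y 0 * dz 0 - z 0 * dy 0 = 0.
Proof.
  intros Hpos Hy0 Hratio. set (c := y 0 * dz 0 - z 0 * dy 0).
  destruct (Req_dec c 0) as [h | h]; [exact h | exfalso].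
  assert (Habs : 0 < Rmin 1 (Rabs c)) by (apply Rmin_pos; [lra | apply Rabs_pos_lt, h]).
  destruct (filter_and _ _ (is_lim_eventually_close _ _ Hy0 _ Habs)
              (is_lim_eventually_close _ _ Hratio (1 / 2) ltac:(lra))) as [M HM].
  set (a := Rmax M x0 + 1).
  assert (Ha : M < a /\ x0 < a)
    by (unfold a; split; [assert (H := Rmax_l M x0) | assert (H := Rmax_r M x0)]; lra).
  destruct (MVT_is_derive (fun x => z x / y x) (fun x => c / y x ^ 2) a (a + 2))
    as [t [Ht Hgt]]; [lra | |].
  { intros t Ht. apply ratio_derive. assert (0 < y t) by (apply Hpos; lra). lra. }
  destruct (HM a) as [_ Hga]; [lra|]. destruct (HM (a + 2)) as [_ Hgb]; [lra|].
  destruct (HM t) as [Hyt _]; [lra|].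
  apply Rabs_def2 in Hga, Hgb.
  assert (Hyt0 : 0 < y t) by (apply Hpos; lra).
  assert (Hyt2 : y t ^ 2 < Rabs c).
  { rewrite Rminus_0_r, Rabs_pos_eq in Hyt by lra.
    assert (H1 := Rmin_l 1 (Rabs c)). assert (H2 := Rmin_r 1 (Rabs c)). nra. }
  assert (Hc2 : (y t ^ 2) ^ 2 < c ^ 2) by (rewrite <- (pow2_abs c); nra).
  cbv beta in Hgt.
  set (D := z (a + 2) / y (a + 2) - z a / y a) in *. set (Y := y t ^ 2) in *.
  assert (0 < Y) by (unfold Y; nra).
  assert (Hdiff : D * Y = 2 * c) by (rewrite Hgt; field; lra).
  assert (D ^ 2 < 1) by (unfold D; destruct Hga, Hgb; nra).
  assert (D ^ 2 * Y ^ 2 = 4 * c ^ 2)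
    by (replace (4 * c ^ 2) with ((2 * c) ^ 2) by ring; rewrite <- Hdiff; ring).
  assert (D ^ 2 * Y ^ 2 <= 1 * Y ^ 2) by (apply Rmult_le_compat_r; nra).
  nra.
Qed.

Lemma recessive_unique (x0 : R) :
  (forall x, x0 <= x -> 0 < y x) -> is_lim y p_infty 0 ->
  is_lim (fun x => z x / y x) p_infty 1 -> forall x, x0 <= x -> z x = y x.
Proof.
  intros Hpos Hy0 Hratio x Hx.
  set (g := fun x => z x / y x).
  assert (Hconst : Rbar_locally p_infty (fun t => g x = g t)).
  { exists x. intros t Ht.
    destruct (MVT_is_derive g (fun _ => 0) x t Ht) as [s [_ Hgs]]; [|lra].
    intros s Hs. replace 0 with ((y 0 * dz 0 - z 0 * dy 0) / y s ^ 2)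
      by (rewrite (wronskian_zero x0) by assumption; unfold Rdiv; ring).
    apply ratio_derive. assert (0 < y s) by (apply Hpos; lra). lra. }
  assert (Hgx : g x = 1).
  { assert (Hlim : is_lim g p_infty (g x))
      by exact (is_lim_ext_loc (fun _ => g x) g p_infty (g x) Hconst (is_lim_const _ _)).
    apply is_lim_unique in Hlim, Hratio. change (Lim g p_infty = 1) in Hratio.
    rewrite Hratio in Hlim. now injection Hlim. }
  unfold g in Hgx. assert (0 < y x) by auto. field_simplify_eq in Hgx; lra.
Qed.

End Recessive.

(* Trial functions for the Riccati comparison: [k = 4a + 2] and [k = 4a - 2] give the
   two signs of the defect. *)
Definition Tk (k x : R) : R := sqrt (k + x ^ 2) / 2.
Definition dTk (k x : R) : R := x / (2 * sqrt (k + x ^ 2)).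
Definition Gk (k x : R) : R := (x * sqrt (k + x ^ 2) + k * ln (x + sqrt (k + x ^ 2))) / 4.

Lemma sqrt_add_sq_facts (k x : R) : 0 < k ->
  0 < sqrt (k + x ^ 2) /\ sqrt (k + x ^ 2) * sqrt (k + x ^ 2) = k + x ^ 2.
Proof.
  intros Hk. assert (0 < k + x ^ 2) by (assert (0 <= x ^ 2) by apply pow2_ge_0; lra).
  split; [apply sqrt_lt_R0 | apply sqrt_sqrt]; lra.
Qed.

Lemma Tk_nonneg (k x : R) : 0 <= Tk k x.
Proof. unfold Tk. assert (0 <= sqrt (k + x ^ 2)) by apply sqrt_pos. lra. Qed.

Lemma Tk_derive (k x : R) : 0 < k -> is_derive (Tk k) x (dTk k x).
Proof.
  intros Hk. destruct (sqrt_add_sq_facts k x Hk) as [HS HS2]. unfold Tk, dTk.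
  auto_derive; replace (x * (x * 1)) with (x ^ 2) by ring; [nra | field; lra].
Qed.

Lemma Gk_derive (k x : R) : 0 < k -> is_derive (Gk k) x (Tk k x).
Proof.
  intros Hk. destruct (sqrt_add_sq_facts k x Hk) as [HS HS2].
  assert (0 < x + sqrt (k + x ^ 2)) by nra.
  unfold Gk, Tk. auto_derive; replace (x * (x * 1)) with (x ^ 2) by ring; [repeat split; nra|].
  set (S := sqrt (k + x ^ 2)) in *. clearbody S.
  replace k with (S * S - x ^ 2) by lra. field. lra.
Qed.

Lemma Tk_defect_bounds (a k x : R) : 0 < k -> 0 <= x ->
  k / 4 - a - 1 / 2 < Tk k x ^ 2 - (x ^ 2 / 4 + a) - dTk k x <= k / 4 - a.
Proof.
  intros Hk Hx. destruct (sqrt_add_sq_facts k x Hk) as [HS HS2].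
  assert (Hxs : x < sqrt (k + x ^ 2)) by nra.
  replace (Tk k x ^ 2 - (x ^ 2 / 4 + a) - dTk k x) with (k / 4 - a - x / (2 * sqrt (k + x ^ 2)))
    by (unfold Tk, dTk;
        replace ((sqrt (k + x ^ 2) / 2) ^ 2) with (sqrt (k + x ^ 2) * sqrt (k + x ^ 2) / 4)
          by field; rewrite HS2; field; lra).
  assert (0 <= x / (2 * sqrt (k + x ^ 2)) < 1 / 2); [|lra].
  split; [apply Rdiv_le_0_compat; lra|].
  apply (Rmult_lt_reg_r (2 * sqrt (k + x ^ 2))); [lra|].
  unfold Rdiv. rewrite Rmult_assoc, Rinv_l by lra. lra.
Qed.

Lemma Tk_le (k x : R) : 0 <= k -> 0 < x -> 2 * Tk k x <= x + k / (2 * x).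
Proof.
  intros Hk Hx. unfold Tk.
  replace (2 * (sqrt (k + x ^ 2) / 2)) with (sqrt (k + x ^ 2)) by field.
  assert (0 <= k / (2 * x)) by (apply Rdiv_le_0_compat; lra).
  assert (Hpos : 0 <= x + k / (2 * x)) by lra.
  rewrite <- (sqrt_pow2 (x + k / (2 * x))) by exact Hpos.
  apply sqrt_le_1_alt.
  replace ((x + k / (2 * x)) ^ 2) with (k + x ^ 2 + (k / (2 * x)) ^ 2) by (field; lra).
  assert (0 <= (k / (2 * x)) ^ 2) by apply pow2_ge_0. lra.
Qed.

Lemma is_pcfU_derive (a : R) (u : R -> R) : is_pcfU a u ->
  (forall x, is_derive u x (Derive u x)) /\
  (forall x, is_derive (Derive u) x ((x ^ 2 / 4 + a) * u x)).
Proof.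
  intros [[du Hdu] _].
  assert (HD : forall x, Derive u x = du x) by (intros x; apply is_derive_unique, Hdu).
  split; intros x; [rewrite HD; apply Hdu|].
  apply (is_derive_ext du); [intros t; now rewrite HD | apply Hdu].
Qed.

Definition pcf_shift (u : R -> R) (x : R) : R := x / 2 * u x - Derive u x.

Section PcfU.

Variables (a : R) (u : R -> R).
Hypothesis Hu : is_pcfU a u.

Let Hu' := proj1 (is_pcfU_derive a u Hu).
Let Hu'' := proj2 (is_pcfU_derive a u Hu).
Let Hnorm : pcf_normalized a u := proj2 Hu.

Lemma pcf_riccati_half (x0 : R) : -1 / 2 < a -> 0 <= x0 ->
  (forall x, x0 <= x -> 0 < u x) -> 0 < - Derive u x0 - x0 / 2 * u x0.
Proof.
  intros Ha Hx0 Hpos.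
  apply (riccati_comparison_pos u (Derive u) (fun x => x ^ 2 / 4 + a) (fun x => x / 2)
           (fun _ => 1 / 2) (fun x => x ^ 2 / 4)); auto.
  - intros x. auto_derive; [exact I | field].
  - intros x. auto_derive; [exact I | field].
  - intros x Hx. lra.
  - intros x Hx. lra.
  - exact (normalized_is_lim_0 a u Hnorm).
  - apply (is_lim_ext (fun x => / 2 * (x * u x))); [intros x; field|].
    replace (Finite 0) with (Rbar_mult (/ 2) 0) by (simpl; f_equal; ring).
    apply is_lim_scal_l, (normalized_is_lim_mul_id a u Hnorm).
Qed.

Lemma pcf_pos (x : R) : -1 / 2 < a -> 0 <= x -> 0 < u x.
Proof.
  intros Ha Hx. destruct (Rlt_or_le 0 (u x)) as [h | h]; [exact h | exfalso].
  destruct (last_nonpos_point u x) as [z [Hxz [Hz Hafter]]]; auto.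
  - intros t. apply derivable_continuous_pt, ex_derive_Reals_0. eexists; apply Hu'.
  - exact (normalized_eventually_pos a u Hnorm).
  - (* past its last nonpositive point [u] would have [u' < - x u / 2 <= 0] *)
    destruct (MVT_is_derive u (Derive u) z (z + 1)) as [c [Hc Huc]]; [lra | intros; apply Hu'|].
    assert (0 < - Derive u c - c / 2 * u c).
    { apply pcf_riccati_half; [exact Ha | lra |]. intros t Ht; apply Hafter; lra. }
    assert (0 < u c) by (apply Hafter; lra).
    assert (0 <= c / 2 * u c) by (apply Rmult_le_pos; lra).
    assert (0 < u (z + 1)) by (apply Hafter; lra).
    lra.
Qed.

Lemma pcf_riccati_upper (x : R) : -1 / 2 < a -> 0 <= x ->
  - Derive u x - Tk (4 * a + 2) x * u x < 0.
Proof.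
  intros Ha Hx.
  apply (riccati_comparison_neg u (Derive u) (fun x => x ^ 2 / 4 + a) (Tk (4 * a + 2))
           (dTk (4 * a + 2)) (Gk (4 * a + 2))); auto.
  - intros t. apply Tk_derive. lra.
  - intros t. apply Gk_derive. lra.
  - intros t Ht. apply pcf_pos; lra.
  - intros t _. apply Tk_nonneg.
  - intros t Ht. destruct (Tk_defect_bounds a (4 * a + 2) t) as [H _]; lra.
Qed.

Lemma pcf_riccati_lower (x : R) : 1 / 2 < a -> 0 <= x ->
  0 < - Derive u x - Tk (4 * a - 2) x * u x.
Proof.
  intros Ha Hx.
  apply (riccati_comparison_pos u (Derive u) (fun x => x ^ 2 / 4 + a) (Tk (4 * a - 2))
           (dTk (4 * a - 2)) (Gk (4 * a - 2))); auto.
  - intros t. apply Tk_derive. lra.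
  - intros t. apply Gk_derive. lra.
  - intros t Ht. apply pcf_pos; lra.
  - intros t _. apply Tk_nonneg.
  - intros t Ht. destruct (Tk_defect_bounds a (4 * a - 2) t) as [_ H]; lra.
  - exact (normalized_is_lim_0 a u Hnorm).
  - apply (is_lim_le_le_loc (fun _ => 0) (fun x => x * u x));
      [| apply is_lim_const | exact (normalized_is_lim_mul_id a u Hnorm)].
    exists (4 * a); intros t Ht.
    assert (0 < u t) by (apply pcf_pos; lra).
    assert (2 * Tk (4 * a - 2) t <= t + (4 * a - 2) / (2 * t)) by (apply Tk_le; lra).
    assert ((4 * a - 2) / (2 * t) <= t).
    { apply (Rmult_le_reg_r (2 * t)); [lra|].
      unfold Rdiv. rewrite Rmult_assoc, Rinv_l by lra. nra. }
    split; [apply Rmult_le_pos; [apply Tk_nonneg | lra] | apply Rmult_le_compat_r; lra].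
Qed.

Lemma pcf_shift_gt (x : R) : -1 / 2 < a -> 0 <= x -> x * u x < pcf_shift u x.
Proof.
  intros Ha Hx.
  assert (0 < - Derive u x - x / 2 * u x)
    by (apply pcf_riccati_half; auto; intros t Ht; apply pcf_pos; lra).
  unfold pcf_shift. lra.
Qed.

Lemma pcf_shift_lt (x : R) : -1 / 2 < a -> 0 < x ->
  pcf_shift u x < (x + (4 * a + 2) / (2 * x)) * u x.
Proof.
  intros Ha Hx.
  assert (H := pcf_riccati_upper x Ha ltac:(lra)).
  assert (2 * Tk (4 * a + 2) x <= x + (4 * a + 2) / (2 * x)) by (apply Tk_le; lra).
  assert (0 <= (4 * a + 2) / (2 * x)) by (apply Rdiv_le_0_compat; lra).
  assert (0 < u x) by (apply pcf_pos; lra).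
  unfold pcf_shift. nra.
Qed.

(* [pcf_shift u t * t^(a - 1/2) * e^(t^2/4)] is the normalizing product of [u] times
   [pcf_shift u t / (t u t)], which is squeezed between 1 and [1 + (4a + 2) / t]. *)
Lemma pcf_shift_normalized : -1 / 2 < a -> pcf_normalized (a - 1) (pcf_shift u).
Proof.
  intros Ha. set (k := 4 * a + 2).
  apply (is_lim_ext_loc (fun t => (u t * Rpower t (a + 1 / 2) * exp (t ^ 2 / 4)) *
                                  (pcf_shift u t / (t * u t)))).
  - exists 0. intros t Ht. assert (0 < u t) by (apply pcf_pos; lra).
    replace (a + 1 / 2) with (a - 1 + 1 / 2 + 1) by ring.
    rewrite Rpower_plus, Rpower_1 by exact Ht. field. lra.
  - replace (Finite 1) with (Rbar_mult 1 1) by (simpl; f_equal; ring).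
    apply is_lim_mult; [exact Hnorm | | exact I].
    apply (is_lim_le_le_loc (fun _ => 1) (fun t => 1 + k / t));
      [| apply is_lim_const | apply is_lim_one_add_div].
    exists 1. intros t Ht. assert (0 < u t) by (apply pcf_pos; lra).
    assert (0 < t * u t) by (apply Rmult_lt_0_compat; lra).
    split.
    + apply (Rmult_le_reg_r (t * u t)); [lra|].
      unfold Rdiv; rewrite Rmult_assoc, Rinv_l by lra.
      assert (Hlow := pcf_shift_gt t Ha ltac:(lra)). lra.
    + apply (Rmult_le_reg_r (t * u t)); [lra|].
      replace (pcf_shift u t / (t * u t) * (t * u t)) with (pcf_shift u t) by (field; lra).
      replace ((1 + k / t) * (t * u t)) with ((t + k) * u t) by (field; lra).
      assert (k / (2 * t) <= k).
      { apply (Rmult_le_reg_r (2 * t)); [lra|].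
        replace (k / (2 * t) * (2 * t)) with k by (field; lra). unfold k; nra. }
      assert (Hup := pcf_shift_lt t Ha ltac:(lra)). fold k in Hup. nra.
Qed.

End PcfU.

Lemma pcf_eq_of_normalized (a x0 : R) (u Y dY : R -> R) : is_pcfU a u ->
  (forall x, is_derive Y x (dY x)) -> (forall x, is_derive dY x ((x ^ 2 / 4 + a) * Y x)) ->
  (forall x, x0 <= x -> 0 < Y x) -> pcf_normalized a Y ->
  forall x, x0 <= x -> u x = Y x.
Proof.
  intros Hu HY HdY Hpos HYn.
  destruct (is_pcfU_derive a u Hu) as [Hu' Hu''].
  apply (recessive_unique (fun x => x ^ 2 / 4 + a) Y dY u (Derive u)); auto.
  - exact (normalized_is_lim_0 a Y HYn).
  - apply (is_lim_ext_loc
             (fun x => (u x * Rpower x (a + 1 / 2) * exp (x ^ 2 / 4)) /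
                       (Y x * Rpower x (a + 1 / 2) * exp (x ^ 2 / 4)))).
    + exists x0. intros x Hx. assert (0 < Y x) by (apply Hpos; lra).
      assert (0 < Rpower x (a + 1 / 2)) by apply exp_pos.
      assert (0 < exp (x ^ 2 / 4)) by apply exp_pos.
      field. repeat split; lra.
    + replace (Finite 1) with (Rbar_div 1 1) by (simpl; f_equal; field).
      apply is_lim_div; [exact (proj2 Hu) | exact HYn | | exact I].
      intros H; injection H; lra.
Qed.

Section Family.

Variable U : R -> R -> R.
Hypothesis HU : forall a, is_pcfU a (U a).

Lemma pcf_ladder (n x : R) : -1 / 2 < n -> 0 <= x -> U (n - 1) x = pcf_shift (U n) x.
Proof.
  intros Hn Hx.
  destruct (is_pcfU_derive n (U n) (HU n)) as [Hu' Hu''].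
  refine (pcf_eq_of_normalized (n - 1) x (U (n - 1)) (pcf_shift (U n))
            (fun t => U n t / 2 + t / 2 * Derive (U n) t - (t ^ 2 / 4 + n) * U n t)
            (HU (n - 1)) _ _ _ (pcf_shift_normalized n (U n) (HU n) Hn) x (Rle_refl x)).
  - intros t. unfold pcf_shift. auto_derive; [repeat split; eexists; eauto|].
    rewrite_Derive Hu' t. rewrite_Derive Hu'' t. field.
  - intros t. auto_derive; [repeat split; eexists; eauto|].
    rewrite_Derive Hu' t. rewrite_Derive Hu'' t. unfold pcf_shift. field.
  - intros t Ht. assert (H := pcf_shift_gt n (U n) (HU n) t Hn ltac:(lra)).
    assert (0 <= t * U n t) by (apply Rmult_le_pos; [|left; apply (pcf_pos n)]; auto; lra).
    lra.
Qed.

Lemma pcf_ratio_lower (n x : R) : -1 / 2 < n -> 0 <= x ->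
  2 / (x + sqrt (4 * n + 2 + x ^ 2)) < U n x / U (n - 1) x.
Proof.
  intros Hn Hx. rewrite (pcf_ladder n x Hn Hx).
  assert (Hpos : 0 < U n x) by (apply (pcf_pos n); auto).
  assert (Hshift := pcf_shift_gt n (U n) (HU n) x Hn Hx).
  assert (Hup := pcf_riccati_upper n (U n) (HU n) x Hn Hx).
  unfold pcf_shift, Tk in *.
  assert (0 < sqrt (4 * n + 2 + x ^ 2))
    by (apply sqrt_lt_R0; assert (0 <= x ^ 2) by apply pow2_ge_0; lra).
  apply Rdiv_lt_Rdiv; [lra | nra | lra].
Qed.

Lemma pcf_ratio_upper (n x : R) : 1 / 2 < n -> 0 <= x ->
  U n x / U (n - 1) x < 2 / (x + sqrt (4 * n - 2 + x ^ 2)).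
Proof.
  intros Hn Hx. rewrite (pcf_ladder n x ltac:(lra) Hx).
  assert (Hpos : 0 < U n x) by (apply (pcf_pos n); auto; lra).
  assert (Hlow := pcf_riccati_lower n (U n) (HU n) x Hn Hx).
  unfold pcf_shift, Tk in *.
  assert (0 < sqrt (4 * n - 2 + x ^ 2))
    by (apply sqrt_lt_R0; assert (0 <= x ^ 2) by apply pow2_ge_0; lra).
  apply Rdiv_lt_Rdiv; [nra | lra | lra].
Qed.

Lemma pcf_minus_half (x : R) : 0 < x ->
  U (-1 / 2) x = exp (- (x ^ 2 / 4)) /\ U (-1 / 2 - 1) x = x * exp (- (x ^ 2 / 4)).
Proof.
  intros Hx. split.
  - apply (pcf_eq_of_normalized (-1 / 2) x (U (-1 / 2)) (fun t => exp (- (t ^ 2 / 4)))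
             (fun t => - (t / 2) * exp (- (t ^ 2 / 4))));
      [apply HU | | | intros; apply exp_pos | | apply Rle_refl].
    + intros t. auto_derive; [exact I | fold_sq t; field].
    + intros t. auto_derive; [exact I | fold_sq t; field].
    + apply (is_lim_ext_loc (fun _ => 1)); [|apply is_lim_const].
      exists 0. intros t Ht. replace (-1 / 2 + 1 / 2) with 0 by field.
      rewrite Rpower_O by exact Ht. rewrite exp_Ropp. field. apply Rgt_not_eq, exp_pos.
  - apply (pcf_eq_of_normalized (-1 / 2 - 1) x (U (-1 / 2 - 1))
             (fun t => t * exp (- (t ^ 2 / 4))) (fun t => (1 - t ^ 2 / 2) * exp (- (t ^ 2 / 4))));
      [apply HU | | | | | apply Rle_refl].
    + intros t. auto_derive; [exact I | fold_sq t; field].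
    + intros t. auto_derive; [exact I | fold_sq t; field].
    + intros t Ht. apply Rmult_lt_0_compat; [lra | apply exp_pos].
    + apply (is_lim_ext_loc (fun _ => 1)); [|apply is_lim_const].
      exists 0. intros t Ht. replace (-1 / 2 - 1 + 1 / 2) with (Ropp 1) by field.
      rewrite Rpower_Ropp, Rpower_1 by exact Ht. rewrite exp_Ropp.
      assert (0 < exp (t ^ 2 / 4)) by apply exp_pos. field. split; lra.
Qed.

End Family.

Theorem theorem9 :
  forall U : R -> R -> R,
  (forall a : R, is_pcfU a (U a)) ->
  forall n x : R, 0 <= x ->
    (1 / 2 < n ->
       2 / (x + sqrt (4 * n + 2 + x ^ 2)) < U n x / U (n - 1) x /\
       U n x / U (n - 1) x < 2 / (x + sqrt (4 * n - 2 + x ^ 2))) /\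
    (-1 / 2 < n < 1 / 2 ->
       2 / (x + sqrt (4 * n + 2 + x ^ 2)) < U n x / U (n - 1) x) /\
    (n = -1 / 2 -> 0 < x ->
       U n x / U (n - 1) x = 2 / (x + sqrt (4 * n + 2 + x ^ 2))).
Proof.
  intros U HU n x Hx. split; [| split].
  - intros Hn. split; [apply (pcf_ratio_lower U HU) | apply (pcf_ratio_upper U HU)]; auto; lra.
  - intros [Hn _]. apply (pcf_ratio_lower U HU); auto.
  - intros Hn Hx'. subst n. destruct (pcf_minus_half U HU x Hx') as [-> ->].
    replace (4 * (-1 / 2) + 2 + x ^ 2) with (x ^ 2) by field.
    rewrite sqrt_pow2 by lra.
    assert (0 < exp (- (x ^ 2 / 4))) by apply exp_pos.
    field. lra.
Qed.
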